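(* Let $K$ be a field of characteristic zero, $m\ge1$, and $<$ a monomial order on $\mathbb{N}^m$. Then the set \[ \mathfrak{m}_< := \{f/g\in K(\!(\mathbf{t})\!)^\circ : f,g\in K[\![\mathbf{t}]\!],\ f_{\min_<(\operatorname{Supp}(g))}=0\} \] is a maximal ideal of $K(\!(\mathbf{t})\!)^\circ$ (membership being independent of the representation $f/g$).
   Context: $f_I$ denotes the coefficient of $\mathbf{t}^I$ in $f$; $\min_<$ is the minimum with respect to $<$ (which exists since monomial orders are well-orders). A monomial order is a total order $<$ on $\mathbb{N}^m$ with $0<a$ for $a\ne0$ and $a<b\Rightarrow a+c<b+c$. $K(\!(\mathbf{t})\!)=\operatorname{Frac}K[\![\mathbf{t}]\!]$, $\mathbf{t}=(t_1,\dots,t_m)$. $V\mathbb{B}[\mathbf{t}]$ is the semiring of subsets of $\mathbb{N}^m$ equal to the vertex set of their Newton polyhedron $\operatorname{conv}(\cdot)+\mathbb{R}^m_{\ge0}$, with $a\oplus b$ = vertices of the Newton polyhedron of $a\cup b$, $a\odot b$ = vertices of that of $a+b$; $V\mathbb{B}(\mathbf{t})$ its fraction semifield ordered by $a/b\le c/d$ iff $a\odot d\oplus b\odot c=b\odot c$. $\operatorname{trop}(f)$ is the vertex set of the Newton polyhedron of $\operatorname{Supp}(f)$, $\operatorname{trop}(f/g)=\operatorname{trop}(f)/\operatorname{trop}(g)$, and $K(\!(\mathbf{t})\!)^\circ=\{q:\operatorname{trop}(q)\le1\}$. *)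

From mathcomp Require Import Rstruct.
From HB Require Import structures.
From mathcomp Require Import all_boot all_order all_algebra.

Set Implicit Arguments. Unset Strict Implicit. Unset Printing Implicit Defensive.
Import Order.TTheory GRing.Theory Num.Theory.
Local Open Scope ring_scope.
Notation R := Rdefinitions.R.

Definition mon (m : nat) := {ffun 'I_m -> nat}.
Definition mzero (m : nat) : mon m := [ffun _ => 0%N].
Definition madd (m : nat) (a b : mon m) : mon m := [ffun i => (a i + b i)%N].

Definition monomial_order (m : nat) (lt : mon m -> mon m -> Prop) : Prop :=
  [/\ (forall a, ~ lt a a),
      (forall a b c, lt a b -> lt b c -> lt a c),
      (forall a b, a <> b -> lt a b \/ lt b a),
      (forall a, a <> @mzero m -> lt (@mzero m) a)
    & (forall a b c, lt a b -> lt (madd a c) (madd b c))].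

Definition ps (K : fieldType) (m : nat) := mon m -> K.

Definition ps0 (K : fieldType) (m : nat) : ps K m := fun _ => 0.
Definition ps1 (K : fieldType) (m : nat) : ps K m :=
  fun a => if a == @mzero m then 1 else 0.
Definition psadd (K : fieldType) (m : nat) (f g : ps K m) : ps K m :=
  fun a => f a + g a.
(* Cauchy product: (fg)_c = sum_{b <= c} f_b g_{c-b}. *)
Definition psmul (K : fieldType) (m : nat) (f g : ps K m) : ps K m :=
  fun c => \sum_(J : {ffun 'I_m -> 'I_((\sum_(i < m) c i)%N.+1)}
                   | [forall i, (J i <= c i)%N])
             f [ffun i => nat_of_ord (J i)] * g [ffun i => (c i - J i)%N].

Definition supp (K : fieldType) (m : nat) (f : ps K m) : mon m -> Prop :=
  fun a => f a != 0.

Definition pfrac (K : fieldType) (m : nat) := (ps K m * ps K m)%type.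
Definition fvalid (K : fieldType) (m : nat) (p : pfrac K m) : Prop :=
  exists a, p.2 a != 0.
Definition feq (K : fieldType) (m : nat) (p q : pfrac K m) : Prop :=
  forall c, psmul p.1 q.2 c = psmul q.1 p.2 c.
Definition fzero (K : fieldType) (m : nat) : pfrac K m := (@ps0 K m, @ps1 K m).
Definition fone (K : fieldType) (m : nat) : pfrac K m := (@ps1 K m, @ps1 K m).
Definition fadd (K : fieldType) (m : nat) (p q : pfrac K m) : pfrac K m :=
  (psadd (psmul p.1 q.2) (psmul q.1 p.2), psmul p.2 q.2).
Definition fmul (K : fieldType) (m : nat) (p q : pfrac K m) : pfrac K m :=
  (psmul p.1 q.1, psmul p.2 q.2).

Definition realv (m : nat) (a : mon m) : 'I_m -> R := fun i => (a i)%:R.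

(* conv(S) + R^m_{>=0} *)
Definition newton (m : nat) (S : mon m -> Prop) : ('I_m -> R) -> Prop :=
  fun x => exists (n : nat) (a : 'I_n -> mon m) (w : 'I_n -> R),
    [/\ (forall k, S (a k)), (forall k, 0 <= w k), \sum_(k < n) w k = 1
      & forall i, \sum_(k < n) w k * (a k i)%:R <= x i].

Definition is_vertex (m : nat) (P : ('I_m -> R) -> Prop) (v : 'I_m -> R) : Prop :=
  P v /\ forall (x y : 'I_m -> R) (t : R), P x -> P y -> 0 < t -> t < 1 ->
    (forall i, v i = t * x i + (1 - t) * y i) -> forall i, x i = y i.

Definition vtx (m : nat) (S : mon m -> Prop) : mon m -> Prop :=
  fun a => is_vertex (newton S) (realv a).

Definition seteq (m : nat) (A B : mon m -> Prop) : Prop := forall a, A a <-> B a.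

Definition voplus (m : nat) (A B : mon m -> Prop) : mon m -> Prop :=
  vtx (fun a => A a \/ B a).
Definition vodot (m : nat) (A B : mon m -> Prop) : mon m -> Prop :=
  vtx (fun c => exists a b, [/\ A a, B b & c = madd a b]).
Definition vone (m : nat) : mon m -> Prop := fun a => a = @mzero m.

(* order of VB(t): a/b <= c/d iff (a . d) (+) (b . c) = b . c *)
Definition vle (m : nat) (a b c d : mon m -> Prop) : Prop :=
  seteq (voplus (vodot a d) (vodot b c)) (vodot b c).

Definition trop (K : fieldType) (m : nat) (f : ps K m) : mon m -> Prop :=
  vtx (supp f).

Definition inO (K : fieldType) (m : nat) (p : pfrac K m) : Prop :=
  fvalid p /\ vle (trop p.1) (trop p.2) (@vone m) (@vone m).

Definition is_min_supp (K : fieldType) (m : nat) (lt : mon m -> mon m -> Prop)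
  (g : ps K m) (x : mon m) : Prop :=
  supp g x /\ forall y, supp g y -> y <> x -> lt x y.

Definition mcond (K : fieldType) (m : nat) (lt : mon m -> mon m -> Prop)
  (p : pfrac K m) : Prop :=
  exists x, is_min_supp lt p.2 x /\ p.1 x = 0.

Definition mlt (K : fieldType) (m : nat) (lt : mon m -> mon m -> Prop)
  (p : pfrac K m) : Prop :=
  inO p /\ exists q, [/\ fvalid q, feq p q & mcond lt q].

(* J is a subset of K((t))^o (a predicate on representations, invariant
   under equality of fractions) which is an ideal. *)
Definition idealO (K : fieldType) (m : nat) (J : pfrac K m -> Prop) : Prop :=
  [/\ (forall p, J p -> inO p),
      (forall p q, fvalid q -> feq p q -> J p -> J q),
      J (@fzero K m),
      (forall p q, J p -> J q -> J (fadd p q))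
    & (forall r p, inO r -> J p -> J (fmul r p))].

Definition maximal_idealO (K : fieldType) (m : nat) (J : pfrac K m -> Prop) : Prop :=
  [/\ idealO J, ~ J (@fone K m)
    & forall J', idealO J' -> (forall p, J p -> J' p) ->
        (forall p, J' p -> J p) \/ (forall p, inO p -> J' p)].

(* The set m_< is the kernel of the residue map f/g |-> f_x / g_x,
   x = min_< (Supp g), from K((t))^o onto K. This map is well defined and a
   ring morphism because the monomials of f lie in the Newton polyhedron of
   Supp g, and a lattice point c of the Newton polyhedron of a set T is never
   below min_< T: by Farkas' lemma some multiple N c dominates coordinatewise a
   sum of N points of T, and a monomial order is compatible with such sums and
   with scaling by N. Being the kernel of a surjection onto a field, m_< is a
   maximal ideal. Vertex sets are harmless since, by Dickson's lemma, the Newton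
   polyhedron of any subset of N^m is spanned by finitely many of its vertices. *)

From Stdlib Require Import Classical FunctionalExtensionality.
From mathcomp Require Import Rstruct.
From HB Require Import structures.
From mathcomp Require Import all_boot all_order all_algebra.
From mathcomp Require boolp.
From mathcomp.algebra_tactics Require Import ring lra.
From mathcomp Require Import zify.
Set Implicit Arguments. Unset Strict Implicit. Unset Printing Implicit Defensive.
Import Order.TTheory GRing.Theory Num.Theory.
Local Open Scope ring_scope.

(** * Fourier-Motzkin elimination and Farkas' lemma *)

Section FourierMotzkin.
Variable F : realFieldType.

(* [(c, d)] stands for the inequality [\sum_j c j * x j <= d]. *)
Definition ineq := ((nat -> F) * F)%type.
Definition lform (k : nat) (c x : nat -> F) : F := \sum_(j < k) c j * x j.
Definition solves k (S : seq ineq) x := forall e, List.In e S -> lform k e.1 x <= e.2.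
Definition vars_lt k (S : seq ineq) := forall e, List.In e S -> forall j, (k <= j)%N -> e.1 j = 0.

Inductive nonneg_comb (S : seq ineq) : (nat -> F) -> F -> Prop :=
 | nnc_mem e : List.In e S -> nonneg_comb S e.1 e.2
 | nnc_add c1 d1 c2 d2 : nonneg_comb S c1 d1 -> nonneg_comb S c2 d2 ->
     nonneg_comb S (fun j => c1 j + c2 j) (d1 + d2)
 | nnc_scale t c d : 0 <= t -> nonneg_comb S c d ->
     nonneg_comb S (fun j => t * c j) (t * d).

Lemma nonneg_comb_trans (S S' : seq ineq) c d :
  (forall e, List.In e S' -> nonneg_comb S e.1 e.2) -> nonneg_comb S' c d -> nonneg_comb S c d.
Proof.
move=> H; elim=> {c d}.
- by move=> e /H.
- by move=> c1 d1 c2 d2 _ h1 _ h2; apply: nnc_add.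
- by move=> t c d t0 _ h; apply: nnc_scale.
Qed.

Lemma lformD k a b c1 c2 x :
  lform k (fun j => a * c1 j + b * c2 j) x = a * lform k c1 x + b * lform k c2 x.
Proof. by rewrite /lform !mulr_sumr -big_split /=; apply: eq_bigr => j _; ring. Qed.

Lemma foldr_max_ge (s : F) L l : List.In l L -> l <= foldr Num.max s L.
Proof.
elim: L => //= a L IH [<-|/IH h]; first by rewrite le_max lexx.
by rewrite le_max h orbT.
Qed.

Lemma foldr_max_le (s u : F) L :
  s <= u -> (forall l, List.In l L -> l <= u) -> foldr Num.max s L <= u.
Proof.
move=> su; elim: L => //= a L IH H; rewrite ge_max H /=; last by left.
by apply: IH => l hl; apply: H; right.
Qed.

Lemma foldr_min_le (s : F) L l : List.In l L -> foldr Num.min s L <= l.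
Proof.
elim: L => //= a L IH [<-|/IH h]; first by rewrite ge_min lexx.
by rewrite ge_min h orbT.
Qed.

Section Elimination.
Variables (k : nat) (S : seq ineq).

Let P := List.filter (fun e : ineq => 0 < e.1 k) S.
Let N := List.filter (fun e : ineq => e.1 k < 0) S.
Let Z := List.filter (fun e : ineq => e.1 k == 0) S.

(* The positive combination of [p] and [q] in which the variable [x k] cancels. *)
Definition fm_comb (p q : ineq) : ineq :=
  (fun j => - q.1 k * p.1 j + p.1 k * q.1 j, - q.1 k * p.2 + p.1 k * q.2).

Definition fm_elim : seq ineq := Z ++ List.flat_map (fun p => List.map (fm_comb p) N) P.

Lemma in_fm_elim e : List.In e fm_elim <->
  List.In e Z \/ exists p q, [/\ List.In p P, List.In q N & e = fm_comb p q].
Proof.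
rewrite /fm_elim List.in_app_iff List.in_flat_map; split.
  case=> [h|[p [hp /List.in_map_iff [q [<- hq]]]]]; first by left.
  by right; exists p, q.
case=> [h|[p [q [hp hq ->]]]]; first by left.
by right; exists p; split => //; apply/List.in_map_iff; exists q.
Qed.

Lemma fm_elim_vars_lt : vars_lt k.+1 S -> vars_lt k fm_elim.
Proof.
move=> hS e /in_fm_elim [/List.filter_In [he /eqP hk]|
  [p [q [/List.filter_In [hp _] /List.filter_In [hq _] ->]]]] j hj.
  by case: (ltngtP k j) hj => // [/hS -> //| <-].
rewrite /fm_comb /=; case: (ltngtP k j) hj => // [hkj|<-] _; last by ring.
by rewrite (hS p hp j hkj) (hS q hq j hkj); ring.
Qed.

Lemma nonneg_comb_fm_elim c d : nonneg_comb fm_elim c d -> nonneg_comb S c d.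
Proof.
apply: nonneg_comb_trans => e /in_fm_elim [/List.filter_In [he _]|
  [p [q [/List.filter_In [hp hpk] /List.filter_In [hq hqk] ->]]]]; first exact: nnc_mem.
apply: (@nnc_add S (fun j => - q.1 k * p.1 j) _ (fun j => p.1 k * q.1 j)).
  by apply: nnc_scale (nnc_mem hp); rewrite oppr_ge0 ltW.
by apply: nnc_scale (nnc_mem hq); rewrite ltW.
Qed.

(* The eliminated variable is chosen between the largest lower bound coming
   from [N] and the smallest upper bound coming from [P]. *)
Lemma fm_elim_solves x : solves k fm_elim x -> exists y, solves k.+1 S y.
Proof.
move=> hx; pose r (e : ineq) := e.2 - lform k e.1 x.
pose t := foldr Num.max (foldr Num.min 0 (List.map (fun p => r p / p.1 k) P))
                        (List.map (fun q => r q / q.1 k) N).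
have bounds p q : List.In p P -> List.In q N -> r q / q.1 k <= r p / p.1 k.
  move=> hp hq; have := hx _ (proj2 (in_fm_elim _) (or_intror
    (ex_intro _ p (ex_intro _ q (And3 hp hq erefl))))).
  rewrite /fm_comb /= lformD.
  move: hp hq => /List.filter_In [_ /= hp] /List.filter_In [_ /= hq] h.
  rewrite -subr_ge0.
  have -> : r p / p.1 k - r q / q.1 k = (- q.1 k * r p + p.1 k * r q) / (p.1 k * - q.1 k).
    by rewrite /r; field; rewrite (ltr0_neq0 hq) (lt0r_neq0 hp).
  apply: divr_ge0; first by rewrite /r; lra.
  by rewrite mulr_ge0 ?oppr_ge0 ?ltW.
have tN q : List.In q N -> r q / q.1 k <= t.
  by move=> hq; apply: foldr_max_ge; apply/List.in_map_iff; exists q.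
have tP p : List.In p P -> t <= r p / p.1 k.
  move=> hp; apply: foldr_max_le.
    by apply: foldr_min_le; apply/List.in_map_iff; exists p.
  by move=> l /List.in_map_iff [q [<- hq]]; apply: bounds.
exists (fun j => if j == k then t else x j) => e he.
rewrite /lform big_ord_recr /= eqxx.
under eq_bigr => j _ do rewrite (ltn_eqF (ltn_ord j)).
rewrite -/(lform k e.1 x); case: (ltrgt0P (e.1 k)) => hk.
- have := tP e (proj2 (List.filter_In _ _ _) (conj he hk)).
  by rewrite ler_pdivlMr // /r => h; rewrite mulrC; lra.
- have := tN e (proj2 (List.filter_In _ _ _) (conj he hk)).
  by rewrite ler_ndivrMr // /r => h; rewrite mulrC; lra.
- rewrite hk mul0r addr0; apply: hx; apply/in_fm_elim; left.
  by apply/List.filter_In; rewrite hk eqxx.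
Qed.

End Elimination.

Theorem fourier_motzkin k S : vars_lt k S ->
  (exists x, solves k S x) \/
  (exists c d, [/\ nonneg_comb S c d, (forall j, c j = 0) & d < 0]).
Proof.
elim: k S => [|k IH] S hS.
  case: (classic (exists e, List.In e S /\ e.2 < 0)) => [[e [he hd]]|hn].
    by right; exists e.1, e.2; split => // [|j]; [exact: nnc_mem|apply: hS].
  left; exists (fun _ => 0) => e he; rewrite /lform big_ord0.
  by case: (lerP 0 e.2) => // h; case: hn; exists e.
case: (IH _ (fm_elim_vars_lt hS)) => [[x /fm_elim_solves]|[c [d [hc h0 hd]]]].
  by left.
by right; exists c, d; split => //; apply: nonneg_comb_fm_elim hc.
Qed.

End FourierMotzkin.

Lemma sum_delta (F : nmodType) (n k : nat) (v : nat -> F) : (k < n)%N ->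
  \sum_(j < n) (if (j : nat) == k then v j else 0) = v k.
Proof.
move=> hk; rewrite (bigD1 (Ordinal hk)) //= eqxx big1 ?addr0 // => j hj.
by rewrite ifN //; apply: contra hj => /eqP h; apply/eqP/val_inj.
Qed.

Section HullSeparation.
Variables (F : realFieldType) (n m : nat) (A : nat -> nat -> F) (a : nat -> F).

(* Unknowns [lam 0, ..., lam n.-1] with [lam >= 0], [\sum lam = 1] and
   [\sum_k lam k * A k i <= a i] for [i < m]. *)
Definition ineq_nonneg k : ineq F := (fun j => if j == k then -1 else 0, 0).
Definition ineq_sum_le : ineq F := (fun j => if (j < n)%N then 1 else 0, 1).
Definition ineq_sum_ge : ineq F := (fun j => if (j < n)%N then -1 else 0, -1).
Definition ineq_row i : ineq F := (fun j => if (j < n)%N then A j i else 0, a i).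

Definition hull_system : seq (ineq F) :=
  List.map ineq_nonneg (List.seq 0 n) ++
  ineq_sum_le :: ineq_sum_ge :: List.map ineq_row (List.seq 0 m).

Lemma in_hull_system e : List.In e hull_system ->
  [\/ exists2 k, (k < n)%N & e = ineq_nonneg k, e = ineq_sum_le, e = ineq_sum_ge
    | exists2 i, (i < m)%N & e = ineq_row i].
Proof.
rewrite /hull_system List.in_app_iff /= => -[/List.in_map_iff [k [<- /List.in_seq hk]]|
  [<-|[<-|/List.in_map_iff [i [<- /List.in_seq hi]]]]].
- by constructor 1; exists k => //; apply/ssrnat.ltP; lia.
- by constructor 2.
- by constructor 3.
- by constructor 4; exists i => //; apply/ssrnat.ltP; lia.
Qed.

Lemma hull_system_vars_lt : vars_lt n hull_system.
Proof.
move=> e /in_hull_system [[k hk ->]|->|->|[i hi ->]] j hj /=; rewrite ?ltnNge ?hj //.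
by rewrite ifN //; apply/eqP => ejk; move: hk; rewrite -ejk ltnNge hj.
Qed.

Lemma lform_restr (v x : nat -> F) :
  lform n (fun j => if (j < n)%N then v j else 0) x = \sum_(j < n) v j * x j.
Proof. by apply: eq_bigr => j _; rewrite ltn_ord. Qed.

Lemma hull_system_solution lam : solves n hull_system lam ->
  [/\ forall k, (k < n)%N -> 0 <= lam k, \sum_(k < n) lam k = 1
    & forall i, (i < m)%N -> \sum_(k < n) lam k * A k i <= a i].
Proof.
have inL e : List.In e (List.map ineq_nonneg (List.seq 0 n)) -> List.In e hull_system.
  by move=> he; apply/List.in_app_iff; left.
have inR e : List.In e (ineq_sum_le :: ineq_sum_ge :: List.map ineq_row (List.seq 0 m)) ->
  List.In e hull_system by move=> he; apply/List.in_app_iff; right.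
move=> hx; split.
- move=> k hk; have := hx _ (inL _ (List.in_map _ _ _ (proj2 (List.in_seq _ _ _)
    (conj (le_0_n _) (ssrnat.ltP hk))))).
  rewrite /lform /=; under eq_bigr => j _ do rewrite (fun_if (fun z => z * lam j)) mul0r.
  by rewrite (sum_delta (fun j => -1 * lam j)) // mulN1r oppr_le0.
- have := hx _ (inR _ (or_introl erefl)); have := hx _ (inR _ (or_intror (or_introl erefl))).
  rewrite /= !lform_restr.
  have -> : \sum_(j < n) (fun=> 1) j * lam j = \sum_(k < n) lam k.
    by apply: eq_bigr => j _; rewrite mul1r.
  have -> : \sum_(j < n) (fun=> -1) j * lam j = - \sum_(k < n) lam k.
    by rewrite -sumrN; apply: eq_bigr => j _; rewrite mulN1r.
  by rewrite lerN2 => h1 h2; apply/eqP; rewrite eq_le h1 h2.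
- move=> i hi; have := hx (ineq_row i) (inR _ (or_intror (or_intror
    (List.in_map _ _ _ (proj2 (List.in_seq _ _ _) (conj (le_0_n _) (ssrnat.ltP hi))))))).
  by rewrite /= lform_restr; under eq_bigr => j _ do rewrite mulrC.
Qed.

Lemma nonneg_comb_hull_system c d : nonneg_comb hull_system c d ->
  exists s (u : nat -> F), [/\ forall i, (i < m)%N -> 0 <= u i,
    forall k, (k < n)%N -> c k <= s + \sum_(i < m) u i * A k i
  & d = s + \sum_(i < m) u i * a i].
Proof.
have u0 (B : nat -> F) : \sum_(i < m) 0 * B i = 0 by rewrite big1 // => i _; rewrite mul0r.
elim=> {c d}.
- move=> e /in_hull_system [[k hk ->]|->|->|[i hi ->]] /=.
  + exists 0, (fun _ => 0); split => //= [k' _|]; rewrite u0 addr0 //.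
    by case: eqP => _; rewrite ?oppr_le0 ?ler01.
  + by exists 1, (fun _ => 0); split => //= [k' ->|]; rewrite u0 ?addr0.
  + by exists (-1), (fun _ => 0); split => //= [k' ->|]; rewrite u0 ?addr0.
  + exists 0, (fun i' => if i' == i then 1 else 0); split => //= [i' _|k' ->|].
    * by case: eqP.
    * under eq_bigr => j _ do rewrite (fun_if (fun z => z * A k' j)) mul1r mul0r.
      by rewrite add0r (sum_delta (fun j => A k' j)).
    * under eq_bigr => j _ do rewrite (fun_if (fun z => z * a j)) mul1r mul0r.
      by rewrite add0r (sum_delta (fun j => a j)).
- move=> c1 d1 c2 d2 _ [s1 [u1 [hu1 hc1 ->]]] _ [s2 [u2 [hu2 hc2 ->]]].
  exists (s1 + s2), (fun i => u1 i + u2 i); split => /=.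
  + by move=> i hi; rewrite addr_ge0 ?hu1 ?hu2.
  + move=> k hk; under eq_bigr => i _ do rewrite mulrDl.
    by rewrite big_split /=; have := hc1 k hk; have := hc2 k hk; lra.
  + have -> : \sum_(i < m) (u1 i + u2 i) * a i =
              \sum_(i < m) u1 i * a i + \sum_(i < m) u2 i * a i.
      by rewrite -big_split; apply: eq_bigr => i _; rewrite mulrDl.
    ring.
- move=> t c d ht _ [s [u [hu hc ->]]].
  exists (t * s), (fun i => t * u i); split => /=.
  + by move=> i hi; rewrite mulr_ge0 ?hu.
  + move=> k hk; have -> : \sum_(i < m) t * u i * A k i = t * \sum_(i < m) u i * A k i.
      by rewrite mulr_sumr; apply: eq_bigr => i _; rewrite mulrA.
    by rewrite -mulrDr ler_wpM2l // hc.
  + have -> : \sum_(i < m) t * u i * a i = t * \sum_(i < m) u i * a i.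
      by rewrite mulr_sumr; apply: eq_bigr => i _; rewrite mulrA.
    by rewrite mulrDr.
Qed.

Theorem hull_or_separation :
  (exists lam : nat -> F, [/\ forall k, (k < n)%N -> 0 <= lam k,
      \sum_(k < n) lam k = 1 & forall i, (i < m)%N -> \sum_(k < n) lam k * A k i <= a i])
  \/ (exists (u : nat -> F) g, [/\ forall i, (i < m)%N -> 0 <= u i,
      \sum_(i < m) u i * a i < g & forall k, (k < n)%N -> g <= \sum_(i < m) u i * A k i]).
Proof.
case: (fourier_motzkin hull_system_vars_lt) => [[x /hull_system_solution hx]|
  [c [d [/nonneg_comb_hull_system [s [u [hu hcu ->]]] h0 hd]]]]; first by left; exists x.
right; exists u, (- s); split => //; first lra.
by move=> k hk; have := hcu k hk; rewrite h0; lra.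
Qed.

End HullSeparation.

(** * Monomials, Dickson's lemma and monomial orders *)

Section Monomials.
Variable m : nat.
Implicit Types a b c : mon m.

Definition mle a b := forall i, (a i <= b i)%N.
Definition msub a b : mon m := [ffun i => a i - b i]%N.
Definition mscale (n : nat) a : mon m := [ffun i => n * a i]%N.

Lemma maddC a b : madd a b = madd b a.
Proof. by apply/ffunP => i; rewrite !ffunE addnC. Qed.
Lemma madd0 a : madd a (@mzero m) = a.
Proof. by apply/ffunP => i; rewrite !ffunE addn0. Qed.
Lemma msubKC a b : mle b a -> madd b (msub a b) = a.
Proof. by move=> h; apply/ffunP => i; rewrite !ffunE subnKC. Qed.
Lemma maddKm a b : msub (madd a b) a = b.
Proof. by apply/ffunP => i; rewrite !ffunE addKn. Qed.
Lemma msub0 c : msub c (@mzero m) = c.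
Proof. by apply/ffunP => i; rewrite !ffunE subn0. Qed.
Lemma msubKm a c : mle a c -> msub c (msub c a) = a.
Proof. by move=> h; apply/ffunP => i; rewrite !ffunE subKn. Qed.
Lemma mle_addr a b : mle a (madd a b).
Proof. by move=> i; rewrite ffunE leq_addr. Qed.
Lemma mle_trans a b c : mle a b -> mle b c -> mle a c.
Proof. by move=> h1 h2 i; apply: leq_trans (h1 i) (h2 i). Qed.
Lemma mscale0 a : mscale 0 a = @mzero m.
Proof. by apply/ffunP => i; rewrite !ffunE. Qed.
Lemma mscaleS n a : mscale n.+1 a = madd a (mscale n a).
Proof. by apply/ffunP => i; rewrite !ffunE mulSn. Qed.

Lemma dickson_prefix k (S : mon m -> Prop) : exists Fl : seq (mon m),
  (forall f, f \in Fl -> S f) /\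
  forall s, S s -> exists2 f, f \in Fl & forall i : 'I_m, (i < k)%N -> (f i <= s i)%N.
Proof.
elim: k S => [|k IH] S.
  case: (classic (exists s, S s)) => [[s hs]|hn].
    by exists [:: s]; split => [f|s' _]; [rewrite inE => /eqP ->|exists s; rewrite ?inE].
  by exists [::]; split => // s hs; case: hn; exists s.
have [Fl [h1 h2]] := IH S.
case: (classic (exists ik : 'I_m, val ik = k)) => [[ik hik]|hn]; last first.
  exists Fl; split => // s /h2 [f hf hfs]; exists f => // i hi.
  by apply: hfs; rewrite ltn_neqAle -ltnS hi andbT; apply/eqP => e; apply: hn; exists i.
have last_coord (i : 'I_m) : (i < k.+1)%N -> i = ik \/ (i < k)%N.
  by rewrite ltnS leq_eqVlt => /orP [/eqP ei|]; [left; apply: val_inj; rewrite /= ei hik|right].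
pose d := (\max_(f <- Fl) f ik)%N.
have hd f : f \in Fl -> (f ik <= d)%N by move=> hf; exact: leq_bigmax_seq.
have hG d' : exists G : seq (mon m), (forall g, g \in G -> S g) /\
   forall s, S s -> (s ik < d')%N ->
     exists2 g, g \in G & forall i : 'I_m, (i < k.+1)%N -> (g i <= s i)%N.
  elim: d' => [|d' [G [hG1 hG2]]]; first by exists [::].
  have [Gd [hd1 hd2]] := IH (fun s => S s /\ s ik = d').
  exists (Gd ++ G); split => [g|s hs]; first by rewrite mem_cat => /orP [/hd1 []|/hG1].
  rewrite ltnS leq_eqVlt => /orP [/eqP e|hlt]; last first.
    by have [g hg hgs] := hG2 s hs hlt; exists g; rewrite ?mem_cat ?hg ?orbT.
  have [g hg hgs] := hd2 s (conj hs e); exists g; first by rewrite mem_cat hg.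
  by move=> i /last_coord [->|/hgs //]; have [_ ->] := hd1 g hg; rewrite e.
have [G [hG1 hG2]] := hG d.
exists (Fl ++ G); split => [g|s hs]; first by rewrite mem_cat => /orP [/h1|/hG1].
case: (ltnP (s ik) d) => hsd.
  by have [g hg hgs] := hG2 s hs hsd; exists g; rewrite ?mem_cat ?hg ?orbT.
have [f hf hfs] := h2 s hs; exists f; first by rewrite mem_cat hf.
by move=> i /last_coord [->|/hfs //]; exact: leq_trans (hd f hf) hsd.
Qed.

Lemma dickson (S : mon m -> Prop) : exists Fl : seq (mon m),
  (forall f, f \in Fl -> S f) /\ forall s, S s -> exists2 f, f \in Fl & mle f s.
Proof.
have [Fl [h1 h2]] := dickson_prefix m S; exists Fl; split => // s /h2 [f hf hfs].
by exists f => // i; apply: hfs.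
Qed.

End Monomials.

Section MonomialOrder.
Variables (m : nat) (lt : mon m -> mon m -> Prop).
Hypothesis lt_mo : monomial_order lt.
Implicit Types a b c d : mon m.

Definition leo a b := lt a b \/ a = b.

Lemma lt_irr a : ~ lt a a. Proof. by case: lt_mo => h _ _ _ _; exact: h. Qed.
Lemma lt_trans a b c : lt a b -> lt b c -> lt a c.
Proof. by case: lt_mo => _ h _ _ _; exact: h. Qed.
Lemma lt_total a b : a <> b -> lt a b \/ lt b a.
Proof. by case: lt_mo => _ _ h _ _; exact: h. Qed.
Lemma lt0m a : a <> @mzero m -> lt (@mzero m) a.
Proof. by case: lt_mo => _ _ _ h _; exact: h. Qed.
Lemma lt_addr a b c : lt a b -> lt (madd a c) (madd b c).
Proof. by case: lt_mo => _ _ _ _ h; exact: h. Qed.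
Lemma lt_addl a b c : lt a b -> lt (madd c a) (madd c b).
Proof. by rewrite ![madd c _]maddC; apply: lt_addr. Qed.

Lemma leo_trans a b c : leo a b -> leo b c -> leo a c.
Proof. by case=> [h1|->] // [h2|<-]; [left; apply: lt_trans h1 h2|left]. Qed.
Lemma lt_leo_trans a b c : lt a b -> leo b c -> lt a c.
Proof. by move=> h1 [h2|<-] //; apply: lt_trans h1 h2. Qed.
Lemma leo_total a b : leo a b \/ lt b a.
Proof. by case: (classic (a = b)) => [->|/lt_total [h|h]]; [left; right|left; left|right]. Qed.
Lemma lt_leoF a b : lt a b -> ~ leo b a.
Proof. by move=> h1 h2; apply: (lt_irr (lt_leo_trans h1 h2)). Qed.
Lemma leo_anti a b : leo a b -> leo b a -> a = b.
Proof. by case=> // h /(lt_leoF h). Qed.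
Lemma leo_add a b c d : leo a b -> leo c d -> leo (madd a c) (madd b d).
Proof.
move=> h1 h2; apply: (@leo_trans _ (madd b c)).
  by case: h1 => [h|->]; [left; apply: lt_addr|right].
by case: h2 => [h|->]; [left; apply: lt_addl|right].
Qed.
Lemma lt_leo_add a b c d : lt a b -> leo c d -> lt (madd a c) (madd b d).
Proof.
move=> h1 h2; apply: (@lt_leo_trans _ (madd b c)); first exact: lt_addr.
by case: h2 => [h|->]; [left; apply: lt_addl|right].
Qed.

Lemma mle_leo a b : mle a b -> leo a b.
Proof.
move=> h; rewrite -(msubKC h); case: (classic (msub b a = @mzero m)) => [->|/lt0m].
  by rewrite madd0; right.
by left; rewrite -{1}(madd0 a); apply: lt_addl.
Qed.

Lemma seq_leo_min (l : seq (mon m)) x0 : x0 \in l ->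
  exists2 x, x \in l & forall y, y \in l -> leo x y.
Proof.
elim: l x0 => // a l IH _ _; case: (classic (exists y, y \in l)) => [[y /IH [x hx hxl]]|hn].
  case: (leo_total a x) => h.
    exists a; rewrite ?mem_head // => z; rewrite inE => /orP [/eqP ->|/hxl /(leo_trans h) //].
    by right.
  exists x; rewrite ?inE ?hx ?orbT // => z; rewrite inE => /orP [/eqP ->|/hxl //].
  by left.
exists a; rewrite ?mem_head // => z; rewrite inE => /orP [/eqP ->|hz]; first by right.
by case: hn; exists z.
Qed.

Lemma leo_min_exists (S : mon m -> Prop) s0 : S s0 ->
  exists a, S a /\ forall s, S s -> leo a s.
Proof.
move=> hs0; have [Fl [h1 h2]] := dickson S.
have [f0 hf0 _] := h2 s0 hs0; have [x hx hxl] := seq_leo_min hf0.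
exists x; split; first exact: h1.
by move=> s /h2 [f hf hfs]; exact: leo_trans (hxl f hf) (mle_leo hfs).
Qed.

Lemma leo_mscale n a b : leo a b -> leo (mscale n a) (mscale n b).
Proof.
move=> h; elim: n => [|n IH]; first by rewrite !mscale0; right.
by rewrite !mscaleS; apply: leo_add.
Qed.

Lemma leo_mscale2l n a b : (0 < n)%N -> leo (mscale n a) (mscale n b) -> leo a b.
Proof.
case: n => // n _ h; case: (leo_total a b) => // hba; exfalso; apply: lt_leoF h.
by rewrite !mscaleS; apply: lt_leo_add => //; apply: leo_mscale; left.
Qed.

Definition mcomb n (z : 'I_n -> nat) (pts : 'I_n -> mon m) : mon m :=
  [ffun i => \sum_(k < n) z k * pts k i]%N.

Lemma leo_mcomb n (z : 'I_n -> nat) pts a : (forall k, leo a (pts k)) ->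
  leo (mscale (\sum_(k < n) z k) a) (mcomb z pts).
Proof.
elim: n z pts => [|n IH] z pts h.
  by right; apply/ffunP => i; rewrite !ffunE !big_ord0.
have -> : mcomb z pts = madd (mcomb (fun k => z (widen_ord (leqnSn n) k))
                                    (fun k => pts (widen_ord (leqnSn n) k)))
                              (mscale (z ord_max) (pts ord_max)).
  by apply/ffunP => i; rewrite !ffunE big_ord_recr.
have -> : mscale (\sum_(k < n.+1) z k) a =
          madd (mscale (\sum_(k < n) z (widen_ord (leqnSn n) k)) a) (mscale (z ord_max) a).
  by apply/ffunP => i; rewrite !ffunE big_ord_recr mulnDl.
by apply: leo_add; [apply: IH|apply: leo_mscale].
Qed.

End MonomialOrder.

(** * Newton polyhedra and their vertices *)

Section NewtonPolyhedron.
Variable m : nat.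
Implicit Types (S T A B : mon m -> Prop) (a c f : mon m) (x y : 'I_m -> R)
  (l : seq (R * mon m)).

(* A list [[:: (w_1, a_1); ...]] stands for the combination [\sum_k w_k a_k]. *)
Definition wcomb l (i : 'I_m) : R := \sum_(p <- l) p.1 * (p.2 i)%:R.
Definition wsum l : R := \sum_(p <- l) p.1.
Definition wlist_on S l := forall p, p \in l -> S p.2 /\ 0 <= p.1.
Definition wscale (t : R) l := [seq (t * p.1, p.2) | p <- l].

Definition NP S x := exists l, [/\ wlist_on S l, wsum l = 1 & forall i, wcomb l i <= x i].

Lemma newtonE S x : newton S x <-> NP S x.
Proof.
split.
  case=> n [a [w [hS hw hsum hx]]].
  exists [seq (w k, a k) | k <- index_enum 'I_n]; split.
  - by move=> p /mapP [k _ ->]; split; [apply: hS|apply: hw].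
  - by rewrite /wsum big_map.
  - by move=> i; rewrite /wcomb big_map.
case=> l [hok hw hc]; pose x0 : R * mon m := (0, @mzero m).
exists (size l), (fun k => (nth x0 l k).2), (fun k => (nth x0 l k).1); split.
- by move=> k; case: (hok (nth x0 l k)) => //; apply: mem_nth.
- by move=> k; case: (hok (nth x0 l k)) => //; apply: mem_nth.
- by rewrite -hw /wsum (big_nth x0) big_mkord.
- by move=> i; apply: le_trans (hc i); rewrite /wcomb (big_nth x0) big_mkord.
Qed.

Lemma wsum_cat l1 l2 : wsum (l1 ++ l2) = wsum l1 + wsum l2.
Proof. by rewrite /wsum big_cat. Qed.
Lemma wcomb_cat l1 l2 i : wcomb (l1 ++ l2) i = wcomb l1 i + wcomb l2 i.
Proof. by rewrite /wcomb big_cat. Qed.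
Lemma wsum_scale t l : wsum (wscale t l) = t * wsum l.
Proof. by rewrite /wsum big_map mulr_sumr. Qed.
Lemma wcomb_scale t l i : wcomb (wscale t l) i = t * wcomb l i.
Proof. by rewrite /wcomb big_map mulr_sumr; apply: eq_bigr => p _ /=; rewrite mulrA. Qed.
Lemma wlist_on_scale S t l : 0 <= t -> wlist_on S l -> wlist_on S (wscale t l).
Proof. by move=> ht hl p /mapP [q /hl [h1 h2] ->]; split => //=; apply: mulr_ge0. Qed.
Lemma wlist_on_cat S l1 l2 : wlist_on S l1 -> wlist_on S l2 -> wlist_on S (l1 ++ l2).
Proof. by move=> h1 h2 p; rewrite mem_cat => /orP [/h1|/h2]. Qed.
Lemma wsum_ge0 S l : wlist_on S l -> 0 <= wsum l.
Proof. by move=> h; rewrite /wsum big_seq sumr_ge0 // => p /h []. Qed.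

Lemma wsum_eq0 S l : wlist_on S l -> wsum l = 0 -> forall i, wcomb l i = 0.
Proof.
move=> hl /eqP; rewrite /wsum big_seq_cond psumr_eq0; last by move=> p /andP [/hl []].
move=> /allP h i; rewrite /wcomb big_seq big1 // => p hp.
by move: (h p hp); rewrite hp => /eqP ->; rewrite mul0r.
Qed.

Lemma NP_mem S a : S a -> NP S (realv a).
Proof.
move=> ha; exists [:: (1, a)]; split.
- by move=> p; rewrite inE => /eqP -> /=; split.
- by rewrite /wsum big_seq1.
- by move=> i; rewrite /wcomb big_seq1 mul1r.
Qed.

Lemma NP_up S x y : NP S x -> (forall i, x i <= y i) -> NP S y.
Proof. by case=> l [h1 h2 h3] hxy; exists l; split => // i; apply: le_trans (h3 i) (hxy i). Qed.

Lemma NP_sub S T x : (forall a, S a -> T a) -> NP S x -> NP T x.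
Proof. by move=> hST [l [h1 h2 h3]]; exists l; split => // p /h1 [/hST]. Qed.

Lemma NP_trans S T x : (forall a, T a -> NP S (realv a)) -> NP T x -> NP S x.
Proof.
move=> hT [l [hl hw hc]].
suff [l' [h1 h2 h3]] : exists l', [/\ wlist_on S l', wsum l' = wsum l
                                     & forall i, wcomb l' i <= wcomb l i].
  by exists l'; split => [||i]; [|rewrite h2|apply: le_trans (h3 i) (hc i)].
elim: l hl {hw hc} => [|p l IH] hl; first by exists [::].
have [l' [h1 h2 h3]] : exists l', [/\ wlist_on S l', wsum l' = wsum l
                                     & forall i, wcomb l' i <= wcomb l i].
  by apply: IH => q hq; apply: hl; rewrite inE hq orbT.
have [/hT [lp [hp1 hp2 hp3]] hp] := hl p (mem_head _ _).
exists (wscale p.1 lp ++ l'); split.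
- by apply: wlist_on_cat => //; apply: wlist_on_scale.
- by rewrite wsum_cat wsum_scale hp2 h2 /wsum big_cons mulr1.
- move=> i; have -> : wcomb (p :: l) i = p.1 * realv p.2 i + wcomb l i.
    by rewrite /wcomb big_cons.
  by rewrite wcomb_cat wcomb_scale; exact: lerD (ler_wpM2l hp (hp3 i)) (h3 i).
Qed.

Lemma NP_ext S T : (forall a, S a <-> T a) -> forall x, NP S x <-> NP T x.
Proof. by move=> h x; split; apply: NP_sub => a /h. Qed.

Definition lin (u x : 'I_m -> R) : R := \sum_(i < m) u i * x i.

Lemma linD u x y : lin u (fun i => x i + y i) = lin u x + lin u y.
Proof. by rewrite /lin -big_split /=; apply: eq_bigr => i _; rewrite mulrDr. Qed.

Lemma lin_realvD u a c : lin u (realv (madd a c)) = lin u (realv a) + lin u (realv c).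
Proof. by rewrite -linD; apply: eq_bigr => i _; rewrite /realv ffunE natrD. Qed.

Lemma lin_realv_mle u a c : (forall i, 0 <= u i) -> mle a c ->
  lin u (realv a) <= lin u (realv c).
Proof. by move=> hu hac; apply: ler_sum => i _; apply: ler_wpM2l => //; rewrite ler_nat. Qed.

Lemma NP_lb S u b x : (forall i, 0 <= u i) -> (forall s, S s -> b <= lin u (realv s)) ->
  NP S x -> b <= lin u x.
Proof.
move=> hu hS [l [h1 h2 h3]].
apply: (@le_trans _ _ (lin u (wcomb l))); last by apply: ler_sum => i _; apply: ler_wpM2l.
have -> : lin u (wcomb l) = \sum_(p <- l) p.1 * lin u (realv p.2).
  rewrite /lin /wcomb; under eq_bigr => i _ do rewrite mulr_sumr.
  rewrite exchange_big /=; apply: eq_bigr => p _; rewrite mulr_sumr.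
  by apply: eq_bigr => i _ /=; rewrite /realv; ring.
rewrite -[b]mul1r -h2 /wsum mulr_suml !big_seq; apply: ler_sum => p /h1 [hp1 hp2].
by apply: ler_wpM2l => //; apply: hS.
Qed.

Definition sumset A B c := exists a b, [/\ A a, B b & c = madd a b].

Lemma NP_sumset A B x y : NP A x -> NP B y -> NP (sumset A B) (fun i => x i + y i).
Proof.
case=> lx [hx1 hx2 hx3] [ly [hy1 hy2 hy3]].
exists [seq (p.1 * q.1, madd p.2 q.2) | p <- lx, q <- ly]; split.
- move=> r /allpairsP [[p q] [/= hp hq ->]] /=.
  have [hp1 hp2] := hx1 p hp; have [hq1 hq2] := hy1 q hq.
  by split; [exists p.2, q.2|apply: mulr_ge0].
- rewrite /wsum big_allpairs_dep /=.
  by under eq_bigr => p _ do rewrite -mulr_sumr -/(wsum ly) hy2 mulr1.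
- move=> i; rewrite /wcomb big_allpairs_dep /=.
  have E p : \sum_(q <- ly) p.1 * q.1 * (madd p.2 q.2 i)%:R =
             p.1 * (p.2 i)%:R + p.1 * wcomb ly i.
    rewrite (eq_bigr (fun q : R * mon m => p.1 * (p.2 i)%:R * q.1 + p.1 * (q.1 * (q.2 i)%:R))).
      by rewrite big_split /= -!mulr_sumr -/(wsum ly) hy2 mulr1.
    by move=> q _; rewrite ffunE natrD; ring.
  rewrite (eq_bigr _ (fun p _ => E p)) big_split /= -mulr_suml -/(wsum lx) hx2 mul1r.
  exact: lerD (hx3 i) (hy3 i).
Qed.

End NewtonPolyhedron.

Section Vertices.
Variable m : nat.
Implicit Types (S T A B : mon m -> Prop) (a c f : mon m) (x y : 'I_m -> R)
  (l : seq (R * mon m)).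

Lemma is_vertex_ext (P Q : ('I_m -> R) -> Prop) v :
  (forall x, P x <-> Q x) -> is_vertex P v -> is_vertex Q v.
Proof. by move=> hPQ [/hPQ hv h]; split => // x y t /hPQ hx /hPQ hy; apply: h. Qed.

Lemma realv_inj a c : (forall i, realv a i = realv c i) -> a = c.
Proof. by move=> h; apply/ffunP => i; apply/eqP; rewrite -(eqr_nat R); apply/eqP/h. Qed.

Lemma NP_wcomb S l : wlist_on S l -> wsum l = 1 -> NP S (wcomb l).
Proof. by exists l. Qed.

(* [c] is the midpoint of [wcomb l] and [2 c - wcomb l], both in the polyhedron. *)
Lemma vertex_wcomb S c : is_vertex (NP S) (realv c) ->
  exists l, [/\ wlist_on S l, wsum l = 1 & forall i, wcomb l i = realv c i].
Proof.
case=> [[l [hl hw hc]] hv]; exists l; split => // i.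
have hy : NP S (fun i => 2 * realv c i - wcomb l i).
  by apply: (NP_up (NP_wcomb hl hw)) => j; have := hc j; lra.
have mid j : realv c j = 1 / 2 * wcomb l j + (1 - 1 / 2) * (2 * realv c j - wcomb l j).
  by field.
have h0 : 0 < 1 / 2 :> R by lra.
have h1 : 1 / 2 < 1 :> R by lra.
by have := hv _ _ _ (NP_wcomb hl hw) hy h0 h1 mid i; lra.
Qed.

Lemma vertex_in S c : is_vertex (NP S) (realv c) -> S c.
Proof.
move=> hv; have [l [hl hw hc]] := vertex_wcomb hv.
have [p hp hp0] : exists2 p, p \in l & 0 < p.1.
  apply: NNPP => hn; move: hw; rewrite /wsum big_seq big1 => [/eqP|q hq].
    by rewrite eq_sym oner_eq0.
  have [_ hq0] := hl q hq; apply/eqP; rewrite eq_le hq0 andbT leNgt.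
  by apply/negP => hq1; apply: hn; exists q.
have [hSp _] := hl p hp.
suff -> : c = p.2 by [].
pose l' := rem p l; have hl' : wlist_on S l' by move=> q /mem_rem /hl.
have ew : wsum l = p.1 + wsum l' by rewrite /wsum (big_rem p).
have ec i : realv c i = p.1 * realv p.2 i + wcomb l' i by rewrite -hc /wcomb (big_rem p).
have hw' := wsum_ge0 hl'.
case: (ltrP p.1 1) => hp1; last first.
  have e0 : wsum l' = 0 by lra.
  have p1 : p.1 = 1 by lra.
  by apply: realv_inj => i; rewrite ec (wsum_eq0 hl' e0) p1 mul1r addr0.
have h1p : 0 < 1 - p.1 by rewrite subr_gt0.
pose z := wcomb (wscale (1 - p.1)^-1 l').
have hz : NP S z.
  apply: NP_wcomb; first by apply: wlist_on_scale => //; rewrite invr_ge0 ltW.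
  rewrite wsum_scale.
  have -> : wsum l' = 1 - p.1 by lra.
  by rewrite mulVf ?gt_eqF.
have ecz i : realv c i = p.1 * realv p.2 i + (1 - p.1) * z i.
  by rewrite ec /z wcomb_scale mulrA divff ?gt_eqF // mul1r.
have ez := proj2 hv _ _ _ (NP_mem hSp) hz hp0 hp1 ecz.
by apply: realv_inj => i; rewrite ecz -ez; ring.
Qed.

Definition wat f l : R := \sum_(q <- l | q.2 == f) q.1.
Definition wdrop f l := [seq q <- l | q.2 != f].

Lemma wsum_wat f l : wsum l = wat f l + wsum (wdrop f l).
Proof. by rewrite /wsum /wat (bigID (fun q : R * mon m => q.2 == f)) /= big_filter. Qed.

Lemma wcomb_wat f l i : wcomb l i = wat f l * realv f i + wcomb (wdrop f l) i.
Proof.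
rewrite /wcomb /wat (bigID (fun q : R * mon m => q.2 == f)) /= big_filter mulr_suml.
by congr (_ + _); apply: eq_bigr => q /eqP ->.
Qed.

Lemma wat_cat f l1 l2 : wat f (l1 ++ l2) = wat f l1 + wat f l2.
Proof. by rewrite /wat big_cat. Qed.

Lemma wat_scale f t l : wat f (wscale t l) = t * wat f l.
Proof. by rewrite /wat big_map mulr_sumr. Qed.

Lemma wlist_on_wdrop (Fl : seq (mon m)) f l : wlist_on (fun a => a \in Fl) l ->
  wlist_on (fun a => a \in [seq g <- Fl | g != f]) (wdrop f l).
Proof.
move=> hl q; rewrite mem_filter => /andP [hq /hl [h1 h2]].
by rewrite mem_filter hq h1.
Qed.

Lemma wsum_wdrop_ge0 S f l : wlist_on S l -> 0 <= wsum (wdrop f l).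
Proof. by move=> hl; apply: (@wsum_ge0 _ S) => q; rewrite mem_filter => /andP [_ /hl]. Qed.

Lemma wcomb_wat1 S f l : wlist_on S l -> wsum l = 1 -> wat f l = 1 ->
  forall i, wcomb l i = realv f i.
Proof.
move=> hl hw hf i; have hd : wsum (wdrop f l) = 0 by move: hw; rewrite (wsum_wat f) hf; lra.
rewrite (wcomb_wat f) hf mul1r (@wsum_eq0 _ S _ _ hd) ?addr0 // => q.
by rewrite mem_filter => /andP [_ /hl].
Qed.

(* Otherwise rescaling the weights away from [f] puts [f] in the hull of the
   other points. *)
Lemma wat_nonredundant (Fl : seq (mon m)) f l :
  ~ NP (fun a => a \in [seq g <- Fl | g != f]) (realv f) ->
  wlist_on (fun a => a \in Fl) l -> wsum l = 1 -> (forall i, wcomb l i <= realv f i) ->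
  wat f l = 1.
Proof.
move=> hn hl hw hc; have hd := wsum_wdrop_ge0 f hl; have hwf := wsum_wat f l.
case: (ltrP (wat f l) 1) => hf1; last by lra.
have hnu : 0 < 1 - wat f l by rewrite subr_gt0.
case: hn; exists (wscale (1 - wat f l)^-1 (wdrop f l)); split.
- by apply: wlist_on_scale; [rewrite invr_ge0 ltW|apply: wlist_on_wdrop].
- rewrite wsum_scale; have -> : wsum (wdrop f l) = 1 - wat f l by lra.
  by rewrite mulVf ?gt_eqF.
- move=> i; rewrite wcomb_scale ler_pdivrMl //.
  by have := hc i; rewrite (wcomb_wat f); lra.
Qed.

Lemma vertex_nonredundant (Fl : seq (mon m)) f : f \in Fl ->
  ~ NP (fun a => a \in [seq g <- Fl | g != f]) (realv f) ->
  is_vertex (NP (fun a => a \in Fl)) (realv f).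
Proof.
move=> hf hn; split; first exact: NP_mem.
move=> x y t [lx [hx1 hx2 hx3]] [ly [hy1 hy2 hy3]] ht0 ht1 hv.
have ht1' : 0 <= 1 - t by lra.
pose L := wscale t lx ++ wscale (1 - t) ly.
have hL : wlist_on (fun a => a \in Fl) L.
  by apply: wlist_on_cat; apply: wlist_on_scale => //; apply: ltW.
have hLw : wsum L = 1 by rewrite wsum_cat !wsum_scale hx2 hy2; ring.
have hLc i : wcomb L i <= realv f i.
  rewrite wcomb_cat !wcomb_scale hv.
  by apply: lerD; apply: ler_wpM2l; rewrite ?hx3 ?hy3 // ltW.
have := wat_nonredundant hn hL hLw hLc; rewrite wat_cat !wat_scale => hw.
have hwx := wsum_wdrop_ge0 f hx1; have hwy := wsum_wdrop_ge0 f hy1.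
have := wsum_wat f lx; have := wsum_wat f ly; rewrite hx2 hy2 => ey ex.
have wx : wat f lx = 1 by nra.
have wy : wat f ly = 1 by nra.
move=> i; have := hx3 i; have := hy3 i; have := hv i.
by rewrite (wcomb_wat1 hx1 hx2 wx) (wcomb_wat1 hy1 hy2 wy); nra.
Qed.

Lemma vertex_reduction n (Fl : seq (mon m)) : (size Fl <= n)%N -> exists G : seq (mon m),
  [/\ {subset G <= Fl}, forall f, f \in Fl -> NP (fun a => a \in G) (realv f)
    & forall g, g \in G -> is_vertex (NP (fun a => a \in G)) (realv g)].
Proof.
elim: n Fl => [|n IH] Fl hs; first by move: hs; rewrite leqn0 => /nilP ->; exists [::].
case: (classic (forall f, f \in Fl -> is_vertex (NP (fun a => a \in Fl)) (realv f))) => hv.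
  by exists Fl; split => // f hf; apply: NP_mem.
have [f hfF hnv] : exists2 f, f \in Fl & ~ is_vertex (NP (fun a => a \in Fl)) (realv f).
  by apply: NNPP => h; apply: hv => f hf; apply: NNPP => hnf; apply: h; exists f.
have hNP : NP (fun a => a \in [seq g <- Fl | g != f]) (realv f).
  by apply: NNPP => h; exact: hnv (vertex_nonredundant hfF h).
have hsz : (size [seq g <- Fl | g != f] <= n)%N.
  have hc : (0 < count (predC (predC1 f)) Fl)%N.
    by rewrite -has_count; apply/hasP; exists f => //=; rewrite negbK.
  have -> : size [seq g <- Fl | g != f] = count (predC1 f) Fl by rewrite size_filter.
  by move: hs; rewrite -(count_predC (predC1 f)); lia.
have [G [g1 g2 g3]] := IH _ hsz; exists G; split => //.
- by move=> g /g1; rewrite mem_filter => /andP [].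
- move=> f' hf'; case: (f' =P f) => [->|/eqP ne]; last by apply: g2; rewrite mem_filter ne.
  by apply: NP_trans hNP => a; apply: g2.
Qed.

Lemma NP_vertices S x : NP S x -> NP (fun c => is_vertex (NP S) (realv c)) x.
Proof.
move=> hx; have [Fl [h1 h2]] := dickson S.
have [G [g1 g2 g3]] := vertex_reduction (leqnn (size Fl)).
have eqG y : NP S y <-> NP (fun a => a \in G) y.
  split; last by apply: NP_sub => a /g1 /h1.
  apply: NP_trans => a /h2 [f hf hfa].
  by apply: (NP_up (g2 f hf)) => i; rewrite /realv ler_nat.
apply: NP_sub (proj1 (eqG x) hx) => g hg.
by apply: (is_vertex_ext _ (g3 g hg)) => y; rewrite eqG.
Qed.

Lemma vtxE S a : vtx S a <-> is_vertex (NP S) (realv a).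
Proof. by split; apply: is_vertex_ext => y; rewrite newtonE. Qed.

Lemma NP_vtx S x : NP (vtx S) x <-> NP S x.
Proof.
split; first by apply: NP_sub => c /vtxE /vertex_in.
by move/NP_vertices; apply: NP_sub => c /vtxE.
Qed.

Lemma vtx_ext S T : (forall x, NP S x <-> NP T x) -> forall a, vtx S a <-> vtx T a.
Proof. by move=> h a; rewrite !vtxE; split; apply: is_vertex_ext => y; rewrite h. Qed.

Lemma seteq_vtx S T : seteq (vtx S) (vtx T) <-> (forall x, NP S x <-> NP T x).
Proof.
split; last exact: vtx_ext.
by move=> h x; rewrite -NP_vtx (NP_ext h) NP_vtx.
Qed.

Lemma NP_sumset_one A x :
  NP (fun c => exists a b, [/\ A a, vone b & c = madd a b]) x <-> NP A x.
Proof.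
apply: NP_ext => a; split; first by case=> [b [z [hb -> ->]]]; rewrite madd0.
by move=> ha; exists a, (@mzero m); rewrite madd0.
Qed.

Lemma NP_union_absorb A B :
  (forall x, NP (fun a => A a \/ B a) x <-> NP B x) <-> (forall a, A a -> NP B (realv a)).
Proof.
split=> [h a ha|h x]; first by apply/h/NP_mem; left.
split; last by apply: NP_sub => b hb; right.
by apply: NP_trans => b [/h //|hb]; apply: NP_mem.
Qed.

Lemma NP_union_ext S S' T T' : (forall x, NP S x <-> NP S' x) ->
  (forall x, NP T x <-> NP T' x) ->
  forall x, NP (fun a => S a \/ T a) x <-> NP (fun a => S' a \/ T' a) x.
Proof.
move=> hS hT x; split; apply: NP_trans => a [ha|ha].
- by apply: NP_sub (proj1 (hS _) (NP_mem ha)) => b hb; left.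
- by apply: NP_sub (proj1 (hT _) (NP_mem ha)) => b hb; right.
- by apply: NP_sub (proj2 (hS _) (NP_mem ha)) => b hb; left.
- by apply: NP_sub (proj2 (hT _) (NP_mem ha)) => b hb; right.
Qed.

Lemma vle_vtx A B :
  vle (vtx A) (vtx B) (@vone m) (@vone m) <-> forall a, A a -> NP B (realv a).
Proof.
rewrite /vle /voplus seteq_vtx -NP_union_absorb.
have e C x : NP (vodot (vtx C) (@vone m)) x <-> NP C x.
  by rewrite NP_vtx NP_sumset_one NP_vtx.
have eU := NP_union_ext (e A) (e B).
split=> h x; last by rewrite eU NP_sumset_one NP_vtx; apply: h.
by rewrite -(NP_vtx B) -(NP_sumset_one (vtx B)) -eU; apply: h.
Qed.

End Vertices.

Lemma clear_denominators n (lam : 'I_n -> rat) : (forall k, 0 <= lam k) ->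
  exists (D : nat) (z : 'I_n -> nat), (0 < D)%N /\ forall k, lam k * D%:R = (z k)%:R.
Proof.
move=> hlam; pose d k := `|denq (lam k)|%N.
have d_gt0 k : (0 < d k)%N by rewrite absz_gt0 denq_neq0.
pose D := (\prod_(k < n) d k)%N.
have dvdD k : (d k %| D)%N by rewrite /D (bigD1 k) //= dvdn_mulr.
exists D, (fun k => `|numq (lam k)| * (D %/ d k))%N; split; first exact: prodn_gt0.
move=> k; rewrite -{1}(divnK (dvdD k)) !natrM mulrA mulrAC; congr (_ * _).
rewrite /d !natr_absz !ger0_norm ?numq_ge0 ?denq_ge0 //.
by rewrite numqE.
Qed.

Definition oext T n (f : 'I_n -> T) (d : T) (j : nat) : T :=
  if insub j is Some j' then f j' else d.

Lemma oextE T n (f : 'I_n -> T) d (j : 'I_n) : oext f d j = f j.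
Proof. by rewrite /oext valK. Qed.

Section LatticeHull.
Variable m : nat.
Implicit Types (T : mon m -> Prop) (a c : mon m).

Lemma hull_or_separated (F : realFieldType) n (pts : 'I_n -> mon m) c :
  (exists lam : 'I_n -> F, [/\ forall k, 0 <= lam k, \sum_(k < n) lam k = 1
     & forall i, \sum_(k < n) lam k * (pts k i)%:R <= (c i)%:R])
  \/ (exists (u : 'I_m -> F) g, [/\ forall i, 0 <= u i, \sum_(i < m) u i * (c i)%:R < g
     & forall k, g <= \sum_(i < m) u i * (pts k i)%:R]).
Proof.
pose A k i : F := (oext (oext pts (@mzero m) k) 0%N i)%:R.
have AE (k : 'I_n) (i : 'I_m) : A k i = (pts k i)%:R by rewrite /A !oextE.
have cE (i : 'I_m) : (oext c 0%N i)%:R = (c i)%:R :> F by rewrite oextE.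
case: (hull_or_separation n m A (fun i => (oext c 0%N i)%:R)) => [[lam [h0 h1 h2]]|
  [u [g [hu hug hg]]]]; [left; exists (fun k => lam k)|right; exists (fun i => u i), g].
  split=> // [k|i]; first exact: h0.
  have <- : \sum_(k < n) lam k * A k i = \sum_(k < n) lam k * (pts k i)%:R.
    by apply: eq_bigr => k _; rewrite AE.
  by rewrite -cE; apply: h2.
split=> [i||k]; first exact: hu.
- have <- : \sum_(i < m) u i * (oext c 0%N i)%:R = \sum_(i < m) u i * (c i)%:R.
    by apply: eq_bigr => i _; rewrite cE.
  exact: hug.
- have <- : \sum_(i < m) u i * A k i = \sum_(i < m) u i * (pts k i)%:R.
    by apply: eq_bigr => i _; rewrite AE.
  exact: hg.
Qed.

Lemma NP_separation (Fl : seq (mon m)) a : ~ NP (fun x => x \in Fl) (realv a) ->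
  exists (u : 'I_m -> R) g, [/\ forall i, 0 <= u i, lin u (realv a) < g
     & forall f, f \in Fl -> g <= lin u (realv f)].
Proof.
move=> hn; pose pts (k : 'I_(size Fl)) := nth (@mzero m) Fl k.
case: (hull_or_separated R pts a) => [[lam [h0 h1 h2]]|[u [g [hu hug hg]]]].
  by case: hn; apply/newtonE; exists (size Fl), pts, lam; split=> // k; apply: mem_nth.
exists u, g; split=> // f hf.
have hk : (index f Fl < size Fl)%N by rewrite index_mem.
by have := hg (Ordinal hk); rewrite /pts /= nth_index.
Qed.

Lemma NP_rat_weights T c : NP T (realv c) ->
  exists n (pts : 'I_n -> mon m) (lam : 'I_n -> rat),
    [/\ forall k, T (pts k), forall k, 0 <= lam k, \sum_(k < n) lam k = 1
      & forall i, \sum_(k < n) lam k * (pts k i)%:R <= (c i)%:R].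
Proof.
move=> /newtonE [n [pts [w [hT hw hsum hx]]]].
case: (hull_or_separated rat pts c) => [[lam [h0 h1 h2]]|[u [g [hu hug hg]]]].
  by exists n, pts, lam.
pose u' i : R := ratr (u i).
have ratr_lin a : ratr (\sum_(i < m) u i * (a i)%:R) = lin u' (realv a).
  by rewrite rmorph_sum; apply: eq_bigr => i _; rewrite rmorphM /= ratr_nat.
have hlb : ratr g <= lin u' (realv c).
  apply: (@NP_lb _ (fun s => exists k, s = pts k)); first by move=> i; rewrite ler0q.
    by move=> s [k ->]; rewrite -ratr_lin ler_rat.
  by apply/newtonE; exists n, pts, w; split=> // k; exists k.
by move: hug; rewrite -(ltr_rat R) ratr_lin ltNge hlb.
Qed.

Lemma NP_nat_weights T c : NP T (realv c) ->
  exists n (pts : 'I_n -> mon m) (z : 'I_n -> nat), [/\ forall k, T (pts k),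
    (0 < \sum_(k < n) z k)%N
  & forall i, (\sum_(k < n) z k * pts k i <= (\sum_(k < n) z k) * c i)%N].
Proof.
move=> /NP_rat_weights [n [pts [lam [hT hl0 hl1 hl2]]]].
have [D [z [hD hz]]] := clear_denominators hl0.
have sz : (\sum_(k < n) z k)%N = D.
  apply/eqP; rewrite -(eqr_nat rat) natr_sum -(eq_bigr _ (fun k _ => hz k)).
  by rewrite -mulr_suml hl1 mul1r.
exists n, pts, z; split; rewrite ?sz // => i.
rewrite -(ler_nat rat) natr_sum natrM [D%:R * _]mulrC.
have -> : \sum_(k < n) (z k * pts k i)%:R = (\sum_(k < n) lam k * (pts k i)%:R) * D%:R.
  by rewrite mulr_suml; apply: eq_bigr => k _; rewrite natrM -hz mulrAC.
exact: (ler_wpM2r (ler0n rat D) (hl2 i)).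
Qed.

(* Scaling by a common denominator of rational convex weights reduces this to
   the compatibility of [lt] with addition. *)
Lemma leo_NP lt : monomial_order lt -> forall T a c,
  (forall t, T t -> leo lt a t) -> NP T (realv c) -> leo lt a c.
Proof.
move=> lt_mo T a c hTa /NP_nat_weights [n [pts [z [hT hz hle]]]].
apply: (leo_mscale2l lt_mo hz); apply: (leo_trans lt_mo (leo_mcomb lt_mo z _)).
  by move=> k; apply: hTa.
by apply: mle_leo => // i; rewrite !ffunE.
Qed.

End LatticeHull.

(** * Formal power series *)

Section PowerSeries.
Variables (K : fieldType) (m : nat).
Implicit Types (f g h : ps K m) (a b c d : mon m).

Definition mleb a b := [forall i, (a i <= b i)%N].
Lemma mlebP a b : reflect (mle a b) (mleb a b).
Proof. exact: forallP. Qed.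

(* The monomials below [c], enumerated through the index set of [psmul]. *)
Definition mbox c : seq (mon m) :=
  [seq [ffun i => nat_of_ord (J i)] | J : {ffun 'I_m -> 'I_((\sum_(i < m) c i).+1)} <-
     enum [pred J : {ffun 'I_m -> 'I_((\sum_(i < m) c i).+1)} | [forall i, (J i <= c i)%N]]].

Lemma psmul_mbox f g c : psmul f g c = \sum_(b <- mbox c) f b * g (msub c b).
Proof.
rewrite /mbox big_map big_enum /psmul; apply: eq_big => // J _.
by congr (_ * g _); apply/ffunP => i; rewrite !ffunE.
Qed.

Lemma mbox_uniq c : uniq (mbox c).
Proof.
rewrite /mbox map_inj_uniq ?enum_uniq // => J J' /ffunP e; apply/ffunP => i; apply: val_inj.
by have := e i; rewrite !ffunE.
Qed.

Lemma mem_mbox c b : (b \in mbox c) = mleb b c.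
Proof.
apply/idP/idP.
  by case/mapP => J; rewrite mem_enum => /forallP hJc ->; apply/forallP => i; rewrite ffunE.
move=> /forallP hb.
have hi i : (b i < (\sum_(j < m) c j).+1)%N.
  by rewrite ltnS (leq_trans (hb i)) // (bigD1 i) //= leq_addr.
apply/mapP; exists [ffun i => Ordinal (hi i)].
  by rewrite mem_enum; apply/forallP => i; rewrite ffunE /=.
by apply/ffunP => i; rewrite !ffunE.
Qed.

Lemma psmul_seq f g c (L : seq (mon m)) : uniq L -> (forall b, (b \in L) = mleb b c) ->
  psmul f g c = \sum_(b <- L) f b * g (msub c b).
Proof.
move=> hu hL; rewrite psmul_mbox; apply: perm_big; apply: uniq_perm => //.
  exact: mbox_uniq.
by move=> b; rewrite mem_mbox hL.
Qed.

Lemma psmul_neq0 f g c : psmul f g c != 0 ->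
  exists b, [/\ mle b c, f b != 0 & g (msub c b) != 0].
Proof.
rewrite psmul_mbox => h; apply: NNPP => hn; move/eqP: h; apply.
apply: big1_seq => b /andP [_]; rewrite mem_mbox => /mlebP hb.
case: (f b =P 0) => [->|/eqP fb]; first by rewrite mul0r.
case: (g (msub c b) =P 0) => [->|/eqP gb]; first by rewrite mulr0.
by case: hn; exists b.
Qed.

Lemma psmul_single f g c b0 : mle b0 c ->
  (forall b, mle b c -> b <> b0 -> f b * g (msub c b) = 0) ->
  psmul f g c = f b0 * g (msub c b0).
Proof.
move=> h0 h; rewrite psmul_mbox (bigD1_seq b0) ?mbox_uniq ?mem_mbox //=; last exact/mlebP.
rewrite big1_seq ?addr0 // => b /andP [/eqP nb]; rewrite mem_mbox => /mlebP hb.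
exact: h.
Qed.

Lemma psmulC f g : psmul f g = psmul g f.
Proof.
apply: functional_extensionality => c.
rewrite psmul_mbox (@psmul_seq g f c (map (msub c) (mbox c))).
- rewrite [RHS]big_map big_seq [RHS]big_seq; apply: eq_bigr => b.
  by rewrite mem_mbox => /mlebP hb; rewrite msubKm // mulrC.
- rewrite map_inj_in_uniq ?mbox_uniq // => b b'; rewrite !mem_mbox => /mlebP h /mlebP h' e.
  by rewrite -(msubKm h) e msubKm.
- move=> d; apply/mapP/idP.
    by case=> b _ ->; apply/forallP => i; rewrite ffunE leq_subr.
  move=> /mlebP hd; exists (msub c d); last by rewrite msubKm.
  by rewrite mem_mbox; apply/forallP => i; rewrite ffunE leq_subr.
Qed.

Lemma psmulDr f g h : psmul f (psadd g h) = psadd (psmul f g) (psmul f h).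
Proof.
apply: functional_extensionality => c; rewrite /psadd !psmul_mbox -big_split /=.
by apply: eq_bigr => b _; rewrite mulrDr.
Qed.

Lemma psmulDl f g h : psmul (psadd f g) h = psadd (psmul f h) (psmul g h).
Proof. by rewrite psmulC psmulDr !(psmulC h). Qed.

Lemma psmul1 f : psmul (@ps1 K m) f = f.
Proof.
apply: functional_extensionality => c.
rewrite (@psmul_single _ _ c (@mzero m)); first by rewrite /ps1 eqxx mul1r msub0.
  by move=> i; rewrite ffunE.
by move=> b _ hb; rewrite /ps1 ifN ?mul0r //; apply/eqP.
Qed.

Lemma psmul_mbox2 f g h c : psmul (psmul f g) h c =
  \sum_(a <- mbox c) \sum_(b <- mbox c)
     (if mleb a b then f a * g (msub b a) * h (msub c b) else 0).
Proof.
rewrite psmul_mbox exchange_big big_seq [RHS]big_seq; apply: eq_bigr => b.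
rewrite mem_mbox => /mlebP hb.
rewrite (@psmul_seq f g b [seq a <- mbox c | mleb a b]).
- by rewrite big_filter big_mkcond /= mulr_suml; apply: eq_bigr => a _; case: ifP; rewrite ?mul0r.
- by rewrite filter_uniq // mbox_uniq.
- move=> a; rewrite mem_filter mem_mbox; apply/andP/idP => [[]//|ha]; split => //.
  by apply/mlebP; apply: mle_trans hb; apply/mlebP.
Qed.

Lemma psmulA f g h : psmul f (psmul g h) = psmul (psmul f g) h.
Proof.
apply: functional_extensionality => c.
rewrite psmul_mbox2 psmul_mbox big_seq [RHS]big_seq; apply: eq_bigr => a.
rewrite mem_mbox => /mlebP ha.
rewrite (@psmul_seq g h (msub c a) [seq msub b a | b <- [seq b <- mbox c | mleb a b]]).
- rewrite big_map big_filter big_mkcond mulr_sumr; apply: eq_bigr => b _.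
  case: ifP => /= hab; last by rewrite mulr0.
  suff -> : msub (msub c a) (msub b a) = msub c b by rewrite mulrA.
  apply/ffunP => i; rewrite !ffunE; move/mlebP: hab => /(_ i) hi.
  by rewrite subnBA // subnK.
- rewrite map_inj_in_uniq ?filter_uniq ?mbox_uniq // => b b'.
  rewrite !mem_filter => /andP [/mlebP h1 _] /andP [/mlebP h1' _] e.
  by rewrite -(msubKC h1) e msubKC.
- move=> d; apply/mapP/idP.
    case=> b; rewrite mem_filter mem_mbox => /andP [/mlebP hab /mlebP hbc] ->.
    by apply/forallP => i; rewrite !ffunE leq_sub2r.
  move=> /mlebP hd; exists (madd a d); last by rewrite maddKm.
  rewrite mem_filter mem_mbox; apply/andP; split; first exact/mlebP/mle_addr.
  apply/forallP => i; rewrite ffunE; have := hd i; rewrite ffunE => h2.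
  by rewrite -(subnKC (ha i)) leq_add2l.
Qed.

Definition psopp f : ps K m := fun a => - f a.

Definition PS := ps K m.
HB.instance Definition _ := boolp.gen_eqMixin PS.
HB.instance Definition _ := boolp.gen_choiceMixin PS.

Lemma psaddA : associative (@psadd K m).
Proof. by move=> f g h; apply: functional_extensionality => a; rewrite /psadd addrA. Qed.
Lemma psaddC : commutative (@psadd K m).
Proof. by move=> f g; apply: functional_extensionality => a; rewrite /psadd addrC. Qed.
Lemma psadd0 : left_id (@ps0 K m) (@psadd K m).
Proof. by move=> f; apply: functional_extensionality => a; rewrite /psadd /ps0 add0r. Qed.
Lemma psaddN : left_inverse (@ps0 K m) psopp (@psadd K m).
Proof. by move=> f; apply: functional_extensionality => a; rewrite /psadd /ps0 /psopp addNr. Qed.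
HB.instance Definition _ := GRing.isZmodule.Build PS psaddA psaddC psadd0 psaddN.

Lemma ps1_neq0 : (@ps1 K m : PS) != (@ps0 K m : PS).
Proof.
apply/eqP => /(congr1 (fun f : ps K m => f (@mzero m))).
by rewrite /ps1 /ps0 eqxx => /eqP; rewrite oner_eq0.
Qed.
HB.instance Definition _ :=
  GRing.Zmodule_isComNzRing.Build PS psmulA psmulC psmul1 psmulDl ps1_neq0.

End PowerSeries.

Section SupportNewton.
Variables (K : fieldType) (m : nat).
Implicit Types (f g : ps K m) (p q : pfrac K m) (a b c : mon m) (x y : 'I_m -> R).

Lemma realvD a b i : realv (madd a b) i = realv a i + realv b i.
Proof. by rewrite /realv ffunE natrD. Qed.

Lemma inOE p : inO p <-> fvalid p /\ forall a, p.1 a != 0 -> NP (supp p.2) (realv a).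
Proof. by rewrite /inO /trop vle_vtx. Qed.

Lemma sumset_vertex_uniq (A B : mon m -> Prop) a b a' b' :
  A a -> B b -> A a' -> B b' -> madd a' b' = madd a b ->
  is_vertex (NP (sumset A B)) (realv (madd a b)) -> a' = a.
Proof.
move=> ha hb ha' hb' e [_ hv].
have M1 : NP (sumset A B) (realv (madd a' b)) by apply: NP_mem; exists a', b.
have M2 : NP (sumset A B) (realv (madd a b')) by apply: NP_mem; exists a, b'.
have h0 : 0 < 1 / 2 :> R by lra.
have h1 : 1 / 2 < 1 :> R by lra.
have mid i : realv (madd a b) i =
    1 / 2 * realv (madd a' b) i + (1 - 1 / 2) * realv (madd a b') i.
  have e2 : realv (madd a b) i = realv a' i + realv b' i by rewrite -e realvD.
  by move: e2; rewrite !realvD; lra.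
have /realv_inj e' : forall i, realv (madd a' b) i = realv (madd a b') i by exact: hv mid.
apply/ffunP => i; move/ffunP: e => /(_ i); move/ffunP: e' => /(_ i); rewrite !ffunE.
by move: (a' i) (a i) (b i) (b' i) => x1 x2 x3 x4; lia.
Qed.

(* Every vertex of [NP(Supp f) + NP(Supp g)] is [a + b] for a unique pair
   in [Supp f * Supp g], so its coefficient in [f g] is [f a * g b != 0]. *)
Lemma NP_supp_psmul f g x y : NP (supp f) x -> NP (supp g) y ->
  NP (supp (psmul f g)) (fun i => x i + y i).
Proof.
move=> hx hy; apply: NP_sub (NP_vertices (NP_sumset hx hy)) => c hv.
have [a [b [ha hb ec]]] := vertex_in hv; rewrite ec in hv *.
rewrite /supp (@psmul_single K m f g _ a (mle_addr a b)); last first.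
  move=> a' ha'c na'; case: (f a' =P 0) => [->|/eqP fa']; first by rewrite mul0r.
  case: (g (msub (madd a b) a') =P 0) => [->|/eqP gb']; first by rewrite mulr0.
  by case: na'; apply: (sumset_vertex_uniq ha hb fa' gb' _ hv); rewrite msubKC.
by rewrite maddKm mulf_neq0.
Qed.

Lemma seq_lin_min (u : 'I_m -> R) (l : seq (mon m)) c0 : c0 \in l ->
  exists2 v, v \in l & forall w, w \in l -> lin u (realv v) <= lin u (realv w).
Proof.
elim: l c0 => // a l IH c0 _; case: (classic (exists c, c \in l)) => [[c /IH [v hv hvl]]|hn].
  case: (lerP (lin u (realv a)) (lin u (realv v))) => h.
    exists a; rewrite ?mem_head // => w; rewrite inE => /orP [/eqP ->//|/hvl].
    exact: le_trans h.
  exists v; rewrite ?inE ?hv ?orbT // => w; rewrite inE => /orP [/eqP ->|/hvl //].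
  exact: ltW.
exists a; rewrite ?mem_head // => w; rewrite inE => /orP [/eqP ->//|hw].
by case: hn; exists w.
Qed.

Lemma lin_min_exists (S : mon m -> Prop) u s0 : (forall i, 0 <= u i) -> S s0 ->
  exists2 v, S v & forall s, S s -> lin u (realv v) <= lin u (realv s).
Proof.
move=> hu hs0; have [Fl [h1 h2]] := dickson S; have [f0 hf0 _] := h2 s0 hs0.
have [v hv hvl] := seq_lin_min u hf0; exists v; first exact: h1.
by move=> s /h2 [f hf hfs]; apply: le_trans (hvl f hf) (lin_realv_mle hu hfs).
Qed.

Lemma NP_lin_separation (S : mon m -> Prop) a : ~ NP S (realv a) ->
  exists (u : 'I_m -> R) t, [/\ forall i, 0 <= u i, lin u (realv a) < t
     & forall s, S s -> t <= lin u (realv s)].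
Proof.
move=> hn; have [Fl [h1 h2]] := dickson S.
have [|u [t [hu hut hg]]] := @NP_separation m Fl a.
  by move=> h; apply: hn; apply: NP_sub h => b /h1.
exists u, t; split=> // s /h2 [f hf hfs].
exact: le_trans (hg f hf) (lin_realv_mle hu hfs).
Qed.

Lemma lin_psmul_lb f g u (t1 t2 : R) :
  (forall s, supp f s -> t1 <= lin u (realv s)) -> (forall s, supp g s -> t2 <= lin u (realv s)) ->
  forall s, supp (psmul f g) s -> t1 + t2 <= lin u (realv s).
Proof.
move=> hf hg s /psmul_neq0 [b [hb fb gb]].
by rewrite -(msubKC hb) lin_realvD; apply: lerD; [apply: hf|apply: hg].
Qed.

Lemma inO_feq p q : inO p -> fvalid q -> feq p q -> inO q.
Proof.
move=> /inOE [[s0 hs0] hp] hq hpq; apply/inOE; split => // a ha; apply: NNPP => hn.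
have [u [t [hu hut hqt]]] := NP_lin_separation hn.
have [v hv hvl] := @lin_min_exists (supp p.2) u s0 hu hs0.
have hp1 s : supp p.1 s -> lin u (realv v) <= lin u (realv s) by move=> /hp; exact: NP_lb hu hvl.
have := NP_supp_psmul (NP_mem ha) (NP_mem hv).
rewrite /supp -(functional_extensionality _ _ hpq) => /(NP_lb hu (lin_psmul_lb hp1 hqt)).
by rewrite linD; lra.
Qed.

End SupportNewton.

(** * The residue map of a monomial order *)

Section ResidueMap.
Variables (K : fieldType) (m : nat) (lt : mon m -> mon m -> Prop).
Hypothesis lt_mo : monomial_order lt.
Implicit Types (f g : ps K m) (p q r : pfrac K m) (a b c x y : mon m).

Definition supp_lb f x := forall a, f a != 0 -> leo lt x a.

Lemma min_supp_lb g x : is_min_supp lt g x -> supp_lb g x.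
Proof. by case=> hx h y hy; case: (classic (y = x)) => [->|ne]; [right|left; apply: h]. Qed.

Lemma min_suppP g x : g x != 0 -> supp_lb g x -> is_min_supp lt g x.
Proof. by move=> hx h; split => // y /h [//|->]. Qed.

Lemma min_supp_exists g : (exists a, g a != 0) -> exists x, is_min_supp lt g x.
Proof.
case=> a ha; have [x [hx hxl]] := leo_min_exists lt_mo (S := supp g) ha.
by exists x; apply: min_suppP.
Qed.

Lemma min_supp_uniq g x y : is_min_supp lt g x -> is_min_supp lt g y -> x = y.
Proof.
move=> hx hy; apply: (leo_anti lt_mo).
  by apply: (min_supp_lb hx); case: hy.
by apply: (min_supp_lb hy); case: hx.
Qed.

Lemma psmul_lb_coef f g x y : supp_lb f x -> supp_lb g y ->
  psmul f g (madd x y) = f x * g y.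
Proof.
move=> hf hg; rewrite (@psmul_single K m f g _ x (mle_addr x y)) ?maddKm // => b hb nbx.
case: (f b =P 0) => [->|/eqP fb]; first by rewrite mul0r.
case: (g (msub (madd x y) b) =P 0) => [->|/eqP gb]; first by rewrite mulr0.
have [hxb|e] := hf b fb; last by case: nbx; rewrite e.
case: (@lt_irr _ _ lt_mo (madd x y)); rewrite -{2}(msubKC hb).
by apply: lt_leo_add => //; apply: hg.
Qed.

Lemma psmul_lb f g x y : supp_lb f x -> supp_lb g y -> supp_lb (psmul f g) (madd x y).
Proof.
move=> hf hg c /psmul_neq0 [b [hb fb gb]].
by rewrite -(msubKC hb); apply: (leo_add lt_mo); [apply: hf|apply: hg].
Qed.

Lemma min_supp_psmul f g x y : is_min_supp lt f x -> is_min_supp lt g y ->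
  is_min_supp lt (psmul f g) (madd x y) /\ psmul f g (madd x y) = f x * g y.
Proof.
move=> hx hy; have e := psmul_lb_coef (min_supp_lb hx) (min_supp_lb hy).
split => //; apply: min_suppP; last exact: psmul_lb (min_supp_lb hx) (min_supp_lb hy).
by rewrite e mulf_neq0 //; [case: hx|case: hy].
Qed.

Lemma inO_supp_lb p x : inO p -> is_min_supp lt p.2 x -> supp_lb p.1 x.
Proof. by move=> /inOE [_ h] hx a /h; apply: leo_NP lt_mo _ _ _ (min_supp_lb hx). Qed.

Lemma fvalid_psmul f g : (exists a, f a != 0) -> (exists b, g b != 0) ->
  exists c, psmul f g c != 0.
Proof.
move=> /min_supp_exists [x hx] /min_supp_exists [y hy].
by have [[h _] _] := min_supp_psmul hx hy; exists (madd x y).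
Qed.

Lemma inO_fadd p q : inO p -> inO q -> inO (fadd p q).
Proof.
move=> /inOE [hp1 hp2] /inOE [hq1 hq2]; apply/inOE; split; first exact: fvalid_psmul.
move=> a /=; rewrite /psadd => ha.
have [/psmul_neq0 [b [hb h1 h2]]|/psmul_neq0 [b [hb h1 h2]]] :
    psmul p.1 q.2 a != 0 \/ psmul q.1 p.2 a != 0.
  by case: (psmul p.1 q.2 a =P 0) => [e|/eqP]; [right; move: ha; rewrite e add0r|left].
  apply: NP_up (NP_supp_psmul (hp2 b h1) (NP_mem h2)) _ => i.
  by rewrite -realvD msubKC.
apply: NP_up (NP_supp_psmul (NP_mem h2) (hq2 b h1)) _ => i.
by rewrite addrC -realvD msubKC.
Qed.

Lemma inO_fmul p q : inO p -> inO q -> inO (fmul p q).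
Proof.
move=> /inOE [hp1 hp2] /inOE [hq1 hq2]; apply/inOE; split; first exact: fvalid_psmul.
move=> a /= /psmul_neq0 [b [hb h1 h2]].
by apply: NP_up (NP_supp_psmul (hp2 b h1) (hq2 _ h2)) _ => i; rewrite -realvD msubKC.
Qed.


(* [p = f/g] has residue [v / d] in [K]: [v] and [d] are the coefficients of
   [f] and [g] at [min_< (Supp g)]. *)
Definition residue p (v d : K) :=
  exists x, [/\ is_min_supp lt p.2 x, p.1 x = v & p.2 x = d].

Lemma residue_exists p : inO p -> exists v d, residue p v d.
Proof.
move=> /inOE [/min_supp_exists [x hx] _].
by exists (p.1 x), (p.2 x), x.
Qed.

Lemma residue_den_neq0 p v d : residue p v d -> d != 0.
Proof. by case=> x [[hx _] _ <-]. Qed.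

Lemma mcond_residue p v d : residue p v d -> (mcond lt p <-> v = 0).
Proof.
case=> x [hx <- _]; split; last by exists x.
by case=> y [hy e]; rewrite (min_supp_uniq hx hy).
Qed.

Lemma residue_fmul p q vp dp vq dq : inO p -> inO q ->
  residue p vp dp -> residue q vq dq -> residue (fmul p q) (vp * vq) (dp * dq).
Proof.
move=> hp hq [x [hx <- <-]] [y [hy <- <-]].
have [h1 h2] := min_supp_psmul hx hy; exists (madd x y); split => //.
change (psmul p.1 q.1 (madd x y) = p.1 x * q.1 y).
exact: (psmul_lb_coef (inO_supp_lb hp hx) (inO_supp_lb hq hy)).
Qed.

Lemma residue_fadd p q vp dp vq dq : inO p -> inO q ->
  residue p vp dp -> residue q vq dq -> residue (fadd p q) (vp * dq + vq * dp) (dp * dq).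
Proof.
move=> hp hq [x [hx <- <-]] [y [hy <- <-]].
have [h1 h2] := min_supp_psmul hx hy; exists (madd x y); split => //.
change (psmul p.1 q.2 (madd x y) + psmul q.1 p.2 (madd x y) = p.1 x * q.2 y + q.1 y * p.2 x).
rewrite (psmul_lb_coef (inO_supp_lb hp hx) (min_supp_lb hy)) maddC.
by rewrite (psmul_lb_coef (inO_supp_lb hq hy) (min_supp_lb hx)).
Qed.

Lemma residue_feq p q vp dp vq dq : inO p -> inO q -> feq p q ->
  residue p vp dp -> residue q vq dq -> vp * dq = vq * dp.
Proof.
move=> hp hq hpq [x [hx <- <-]] [y [hy <- <-]].
rewrite -(psmul_lb_coef (inO_supp_lb hp hx) (min_supp_lb hy)) hpq maddC.
by rewrite (psmul_lb_coef (inO_supp_lb hq hy) (min_supp_lb hx)).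
Qed.

Lemma mcond_feq p q : inO p -> fvalid q -> feq p q -> (mcond lt p <-> mcond lt q).
Proof.
move=> hp hq hpq; have hq' := inO_feq hp hq hpq.
have [vp [dp Vp]] := residue_exists hp; have [vq [dq Vq]] := residue_exists hq'.
rewrite (mcond_residue Vp) (mcond_residue Vq).
have e := residue_feq hp hq' hpq Vp Vq.
have np := residue_den_neq0 Vp; have nq := residue_den_neq0 Vq.
split=> h0; move: e; rewrite h0 mul0r.
  by move=> /esym /eqP; rewrite mulf_eq0 (negPf np) orbF => /eqP.
by move=> /eqP; rewrite mulf_eq0 (negPf nq) orbF => /eqP.
Qed.

Lemma mltE p : mlt lt p <-> inO p /\ mcond lt p.
Proof.
split; first by case=> hp [q [hq hpq /(mcond_feq hp hq hpq)]].
by case=> hp hm; split => //; exists p; split => //; case: (proj1 (inOE p) hp).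
Qed.

Definition psC (k : K) : ps K m := fun c => if c == @mzero m then k else 0.

Lemma psC_min_supp (k : K) : k != 0 -> is_min_supp lt (psC k) (@mzero m).
Proof.
move=> hk; apply: min_suppP; first by rewrite /psC eqxx.
by move=> a; rewrite /psC; case: (a =P @mzero m) => [->|_]; [right|rewrite eqxx].
Qed.

Lemma inO_psC (a b : K) : a != 0 -> inO (psC b, psC a).
Proof.
move=> ha; apply/inOE; split; first by exists (@mzero m); rewrite /= /psC eqxx.
move=> c /=; rewrite /psC; case: (c =P @mzero m) => [-> _|_]; last by rewrite eqxx.
by apply: NP_mem; rewrite /supp /psC eqxx.
Qed.

Lemma residue_psC (a b : K) : a != 0 -> residue (psC b, psC a) b a.
Proof. by move=> ha; exists (@mzero m); split; rewrite /= /psC ?eqxx //; apply: psC_min_supp. Qed.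

Lemma residue_ps1 f : residue (f, @ps1 K m) (f (@mzero m)) 1.
Proof.
exists (@mzero m); split; rewrite /= /ps1 ?eqxx //.
by apply: psC_min_supp; rewrite oner_eq0.
Qed.

Lemma mlt_ideal : idealO (@mlt K m lt).
Proof.
split.
- by move=> p [].
- move=> p q hq hpq /mltE [hp hm]; apply/mltE; split; first exact: inO_feq hp hq hpq.
  exact/(mcond_feq hp hq hpq).
- apply/mltE; split; last exact/(mcond_residue (residue_ps1 (@ps0 K m))).
  apply/inOE; split=> [|a]; first by exists (@mzero m); rewrite /= /ps1 eqxx oner_eq0.
  by rewrite /= /ps0 eqxx.
- move=> p q /mltE [hp hmp] /mltE [hq hmq]; apply/mltE; split; first exact: inO_fadd.
  have [vp [dp Vp]] := residue_exists hp; have [vq [dq Vq]] := residue_exists hq.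
  apply/(mcond_residue (residue_fadd hp hq Vp Vq)).
  by rewrite (proj1 (mcond_residue Vp) hmp) (proj1 (mcond_residue Vq) hmq) !mul0r addr0.
- move=> r p hr /mltE [hp hmp]; apply/mltE; split; first exact: inO_fmul.
  have [vp [dp Vp]] := residue_exists hp; have [vr [dr Vr]] := residue_exists hr.
  apply/(mcond_residue (residue_fmul hr hp Vr Vp)).
  by rewrite (proj1 (mcond_residue Vp) hmp) mulr0.
Qed.

Lemma mlt_fone : ~ mlt lt (@fone K m).
Proof.
move=> /mltE [_ /(mcond_residue (residue_ps1 (@ps1 K m)))].
by rewrite /ps1 eqxx => /eqP; rewrite oner_eq0.
Qed.

Lemma feq_fadd_subK (w r : pfrac K m) :
  feq (fadd w (fadd r (fmul (psC (-1), psC 1) w))) r.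
Proof.
have N1 : psC (-1) = - 1 :> PS K m.
  apply: functional_extensionality => c.
  have -> : (-1 : PS K m) c = - @ps1 K m c by [].
  by rewrite /psC /ps1; case: (c == @mzero m); rewrite ?oppr0.
have E (W1 W2 R1 R2 M : PS K m) : M = -1 ->
    (W1 * (R2 * (1 * W2)) + (R1 * (1 * W2) + (M * W1) * R2) * W2) * R2 =
    R1 * (W2 * (R2 * (1 * W2))) by move->; ring.
by move=> c; congr (_ c); exact: (E w.1 w.2 r.1 r.2 _ N1).
Qed.

(* With [p] of nonzero residue [a / b], [r = w + (r - w)] where [w = r (b/a) p]
   lies in [J] and [r - w] has residue zero. *)
Lemma mlt_maximal (J : pfrac K m -> Prop) : idealO J -> (forall p, mlt lt p -> J p) ->
  forall p, J p -> ~ mlt lt p -> forall r, inO r -> J r.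
Proof.
move=> [J1 J2 _ J4 J5] hsub p Jp nmp r hr; have hp := J1 p Jp.
have [a [b Vp]] := residue_exists hp.
have na : a != 0.
  by apply/eqP => a0; apply: nmp; apply/mltE; split=> //; apply/(mcond_residue Vp).
have [vr [dr Vr]] := residue_exists hr.
have he := @inO_psC a b na; have Ve := @residue_psC a b na.
have n1 : (1 : K) != 0 by rewrite oner_eq0.
have hre := inO_fmul hr he; have Vre := residue_fmul hr he Vr Ve.
pose w := fmul (fmul r (psC b, psC a)) p.
have hw := inO_fmul hre hp; have Vw := residue_fmul hre hp Vre Vp.
have hmo := @inO_psC 1 (-1) n1; have Vmo := @residue_psC 1 (-1) n1.
have hw' := inO_fmul hmo hw; have Vw' := residue_fmul hmo hw Vmo Vw.
have hz := inO_fadd hr hw'; have Vz := residue_fadd hr hw' Vr Vw'.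
have Jz : J (fadd r (fmul (psC (-1), psC 1) w)).
  by apply/hsub/mltE; split=> //; apply/(mcond_residue Vz); field.
apply: J2 (feq_fadd_subK w r) (J4 _ _ (J5 _ _ hre Jp) Jz).
by case/inOE: hr.
Qed.

End ResidueMap.

Theorem proposition4p5 (K : fieldType) (m : nat)
  (lt : mon m -> mon m -> Prop) :
  [pchar K] =i pred0 -> (1 <= m)%N -> monomial_order lt ->
  maximal_idealO (@mlt K m lt) /\
  (forall p q : pfrac K m, inO p -> fvalid q -> feq p q ->
     (mcond lt p <-> mcond lt q)).
Proof.
move=> _ _ lt_mo; split; last exact: mcond_feq.
split; [exact: mlt_ideal|exact: mlt_fone|].
move=> J hJ hsub; case: (classic (forall p, J p -> mlt lt p)) => [|hJm]; [by left|right].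
have [p Jp nmp] : exists2 p, J p & ~ mlt lt p.
  by apply: NNPP => hn; apply: hJm => p Jp; apply: NNPP => hm; apply: hn; exists p.
exact: mlt_maximal hJ hsub p Jp nmp.
Qed.
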